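(* Let $\mathcal{L}$ be a set, $\mathcal{R}\subseteq\mathcal{P}(\mathcal{L})\times\mathcal{L}$, and let $\mathcal{S}=\langle\mathcal{L},\vdash\rangle$ be the Hilbert-type logical structure induced by $\mathcal{R}$. Let $\Pi$ be a collection of relations $\sigma\subseteq\mathcal{P}(\mathcal{L})\times\mathcal{L}$, and let $\mathcal{S}^\Pi=\langle\mathcal{L},\vdash^\Pi\rangle$ be the $\Pi$-restricted companion of $\mathcal{S}$. Define $\varrho\subseteq\mathcal{P}(\mathcal{L})\times\mathcal{L}$ by $(\Delta,\alpha)\in\varrho$ iff $\Delta\vdash^\Pi\alpha$. Then $\vdash^\Pi\,=\,\vdash^\varrho$, where $\vdash^\varrho$ is the $\varrho$-companion of $\mathcal{S}$.
   Context: For $\mathcal{R}\subseteq\mathcal{P}(\mathcal{L})\times\mathcal{L}$, the Hilbert-type logical structure induced by $\mathcal{R}$ is $\langle\mathcal{L},\vdash\rangle$ where $\Gamma\vdash\alpha$ iff there is a finite sequence $(\beta_0,\ldots,\beta_n)$ of elements of $\mathcal{L}$ with $\beta_n=\alpha$ such that for each $0\le i\le n$, either $\beta_i\in\Gamma$ or there is $\Gamma'\subseteq\{\beta_0,\ldots,\beta_{i-1}\}$ with $(\Gamma',\beta_i)\in\mathcal{R}$. The $\Pi$-restricted companion of the structure induced by $\mathcal{R}$ is the Hilbert-type logical structure induced by $\mathcal{R}^\Pi=\{(\Gamma,\alpha)\in\mathcal{R}\mid (\Gamma,\alpha)\in\sigma\text{ for some }\sigma\in\Pi\}$. For a logical structure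 $\langle\mathcal{L},\vdash\rangle$ and $\varrho\subseteq\mathcal{P}(\mathcal{L})\times\mathcal{L}$, the $\varrho$-companion is given by: $\Gamma\vdash^\varrho\alpha$ iff there is $\Delta\subseteq\Gamma$ with $(\Delta,\alpha)\in\varrho$ and $\Delta\vdash\alpha$. *)

Definition rule_rel (L : Type) := (L -> Prop) -> L -> Prop.

Definition hilbert {L : Type} (R : rule_rel L) (Gamma : L -> Prop) (alpha : L) : Prop :=
  exists (n : nat) (beta : nat -> L),
    beta n = alpha /\
    forall i, i <= n ->
      Gamma (beta i) \/
      exists Gamma' : L -> Prop,
        (forall x, Gamma' x -> exists j, j < i /\ x = beta j) /\ R Gamma' (beta i).

Definition restrict_rel {L : Type} (R : rule_rel L) (Pi : rule_rel L -> Prop) : rule_rel L :=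
  fun Gamma alpha => R Gamma alpha /\ exists sigma, Pi sigma /\ sigma Gamma alpha.

Definition restricted_companion {L : Type} (R : rule_rel L) (Pi : rule_rel L -> Prop)
  : (L -> Prop) -> L -> Prop :=
  hilbert (restrict_rel R Pi).

Definition rho_companion {L : Type} (vdash : (L -> Prop) -> L -> Prop) (rho : rule_rel L)
  : (L -> Prop) -> L -> Prop :=
  fun Gamma alpha =>
    exists Delta : L -> Prop, (forall x, Delta x -> Gamma x) /\ rho Delta alpha /\ vdash Delta alpha.


Lemma hilbert_mono {L : Type} (R R' : rule_rel L) (Gamma Gamma' : L -> Prop) (alpha : L) :
  (forall Delta x, R Delta x -> R' Delta x) ->
  (forall x, Gamma x -> Gamma' x) ->
  hilbert R Gamma alpha -> hilbert R' Gamma' alpha.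
Proof.
  intros HR HGamma [n [beta [Hlast Hsteps]]].
  exists n, beta; split; [exact Hlast |].
  intros i Hi.
  destruct (Hsteps i Hi) as [Hprem | [Gamma'' [Hearlier Hrule]]].
  - left; exact (HGamma _ Hprem).
  - right; exists Gamma''; split; [exact Hearlier | exact (HR _ _ Hrule)].
Qed.

Lemma restricted_companion_sub {L : Type} (R : rule_rel L) (Pi : rule_rel L -> Prop)
    (Gamma : L -> Prop) (alpha : L) :
  restricted_companion R Pi Gamma alpha -> hilbert R Gamma alpha.
Proof.
  apply hilbert_mono; [intros Delta x [HR _]; exact HR | trivial].
Qed.

Lemma restricted_companion_mono {L : Type} (R : rule_rel L) (Pi : rule_rel L -> Prop)
    (Gamma Gamma' : L -> Prop) (alpha : L) :
  (forall x, Gamma x -> Gamma' x) ->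
  restricted_companion R Pi Gamma alpha -> restricted_companion R Pi Gamma' alpha.
Proof.
  intros HGamma; apply hilbert_mono; [trivial | exact HGamma].
Qed.

Theorem mainTheorem13 (L : Type) (R : rule_rel L) (Pi : rule_rel L -> Prop) :
  let vdashPi := restricted_companion R Pi in
  let rho : rule_rel L := fun Delta alpha => vdashPi Delta alpha in
  forall (Gamma : L -> Prop) (alpha : L),
    vdashPi Gamma alpha <-> rho_companion (hilbert R) rho Gamma alpha.
Proof.
  intros vdashPi rho Gamma alpha; split.
  - intros Hderiv.
    exists Gamma; repeat split; [trivial | exact Hderiv |].
    exact (restricted_companion_sub R Pi Gamma alpha Hderiv).
  - intros [Delta [HDelta [Hderiv _]]].
    exact (restricted_companion_mono R Pi Delta Gamma alpha HDelta Hderiv).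
Qed.
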